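(* For all integers $0<i<j$, $Q^i<Q^j$ as unifiers of $[1]p$ in $\mathbf{GLP}$, where $Q^i$ denotes the substitution $p\mapsto Q^i(p)$; that is, $Q^i\leq Q^j$ but not $Q^j\leq Q^i$.
   Context: $\mathbf{GLP}$ is the propositional polymodal logic with modalities $[0],[1],\dots$ ($\langle k\rangle:=\neg[k]\neg$) axiomatized by classical tautologies; $[k](\phi\to\psi)\to([k]\phi\to[k]\psi)$; $[k]([k]\phi\to\phi)\to[k]\phi$; $\langle j\rangle\phi\to[k]\langle j\rangle\phi$ for $j<k$; $[j]\phi\to[k]\phi$ for $j\leq k$; rules modus ponens and necessitation. A substitution commutes with all connectives and modalities. $\tau\leq\sigma$ means there is a substitution $\theta$ with $\mathbf{GLP}\vdash\tau(q)\leftrightarrow\theta(\sigma(q))$ for every variable $q$; $\sigma<\tau$ means $\sigma\leq\tau$ and not $\tau\leq\sigma$. Define $Q_1(p):=p$, $Q_{i+1}(p):=p\lor[0]Q_i(p)$, $Q^n(p):=\bigwedge_{i=1}^n([0]Q_i(p)\to Q_i(p))$. *)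

From Stdlib Require Import Arith.

Inductive form : Type :=
| Var : nat -> form
| Bot : form
| Imp : form -> form -> form
| Box : nat -> form -> form.

Definition Neg (a : form) : form := Imp a Bot.
Definition Top : form := Imp Bot Bot.
Definition Or (a b : form) : form := Imp (Neg a) b.
Definition And (a b : form) : form := Neg (Imp a (Neg b)).
Definition Iff (a b : form) : form := And (Imp a b) (Imp b a).
Definition Dia (k : nat) (a : form) : form := Neg (Box k (Neg a)).

(* Boolean evaluation treating variables and boxed formulas as atoms;
   a classical tautology (instance) is a formula true under all such
   evaluations. *)
Fixpoint beval (v : form -> bool) (a : form) : bool :=
  match a with
  | Var n => v (Var n)
  | Bot => false
  | Imp a b => orb (negb (beval v a)) (beval v b)
  | Box k b => v (Box k b)
  end.

Definition Taut (a : form) : Prop := forall v, beval v a = true.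

Inductive GLP : form -> Prop :=
| ax_taut : forall a, Taut a -> GLP a
| ax_K : forall k a b, GLP (Imp (Box k (Imp a b)) (Imp (Box k a) (Box k b)))
| ax_Lob : forall k a, GLP (Imp (Box k (Imp (Box k a) a)) (Box k a))
| ax_neg : forall j k a, j < k -> GLP (Imp (Dia j a) (Box k (Dia j a)))
| ax_mono : forall j k a, j <= k -> GLP (Imp (Box j a) (Box k a))
| r_mp : forall a b, GLP (Imp a b) -> GLP a -> GLP b
| r_nec : forall k a, GLP a -> GLP (Box k a).

Definition subst := nat -> form.

Fixpoint apply (s : subst) (a : form) : form :=
  match a with
  | Var n => s n
  | Bot => Bot
  | Imp a b => Imp (apply s a) (apply s b)
  | Box k b => Box k (apply s b)
  end.

Definition sub_le (tau sigma : subst) : Prop :=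
  exists theta : subst, forall q : nat, GLP (Iff (tau q) (apply theta (sigma q))).

Definition sub_lt (sigma tau : subst) : Prop :=
  sub_le sigma tau /\ ~ sub_le tau sigma.

(* Q_i(p), for i >= 1: Q_1 = p, Q_{i+1} = p \/ [0] Q_i  (Q 0 is junk = p). *)
Fixpoint Q (i : nat) (p : form) : form :=
  match i with
  | 0 => p
  | 1 => p
  | S i' => Or p (Box 0 (Q i' p))
  end.

Definition Qc (i : nat) (p : form) : form := Imp (Box 0 (Q i p)) (Q i p).

Fixpoint Qup (n : nat) (p : form) : form :=
  match n with
  | 0 => Top
  | 1 => Qc 1 p
  | S n' => And (Qup n' p) (Qc n p)
  end.

Definition pvar : nat := 0.
Definition QS (n : nat) : subst :=
  fun q => if Nat.eqb q pvar then Qup n (Var pvar) else Var q.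

From Stdlib Require Import Arith Lia Bool List.

(* Q^n(p) is GLP-equivalent to p \/ ~[0]Q_n(p).  Hence for 0 < i <= j the
   formula Q^j(Q^i(p)) is equivalent to Q^i(p) (because [0]Q_i(p) implies
   [0]Q_j(Q^i(p))), so Q^i is an instance of Q^j via the substitution Q^i itself.
   For the strictness, evaluate on the strict linear order with j points, reading
   [0] as "at every later point" and every [k] with k > 0 as true.  With p false
   everywhere, Q^n(p) holds at a point iff more than n points lie at or above it,
   so Q^j(p) fails everywhere.  If Q^j(p) were equivalent to Q^i(a), then a, which
   implies Q^i(a), would fail everywhere too, and Q^i(a) would hold at the root. *)

Ltac solve_taut := intro v; simpl;
  repeat match goal with
  | |- context[beval ?v ?x] => destruct (beval v x)
  | |- context[?v (Box ?k ?x)] => destruct (v (Box k x))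
  | |- context[?v (Var ?k)] => destruct (v (Var k))
  end; reflexivity.

Lemma taut_mp1 a b : Taut (Imp a b) -> GLP a -> GLP b.
Proof. intros T H. exact (r_mp _ _ (ax_taut _ T) H). Qed.

Lemma taut_mp2 a1 a2 b : Taut (Imp a1 (Imp a2 b)) -> GLP a1 -> GLP a2 -> GLP b.
Proof. intros T H1 H2. exact (r_mp _ _ (taut_mp1 _ _ T H1) H2). Qed.

Lemma taut_mp3 a1 a2 a3 b :
  Taut (Imp a1 (Imp a2 (Imp a3 b))) -> GLP a1 -> GLP a2 -> GLP a3 -> GLP b.
Proof. intros T H1 H2 H3. exact (r_mp _ _ (taut_mp2 _ _ _ T H1 H2) H3). Qed.

Lemma imp_refl a : GLP (Imp a a).
Proof. apply ax_taut. solve_taut. Qed.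

Lemma imp_trans a b c : GLP (Imp a b) -> GLP (Imp b c) -> GLP (Imp a c).
Proof. apply taut_mp2. solve_taut. Qed.

Lemma or_mono a b x y : GLP (Imp a b) -> GLP (Imp x y) -> GLP (Imp (Or a x) (Or b y)).
Proof. apply taut_mp2. solve_taut. Qed.

Lemma box_mono k a b : GLP (Imp a b) -> GLP (Imp (Box k a) (Box k b)).
Proof. intro H. exact (r_mp _ _ (ax_K k a b) (r_nec k _ H)). Qed.

Lemma Q_S k a : 1 <= k -> Q (S k) a = Or a (Box 0 (Q k a)).
Proof. destruct k; [lia | reflexivity]. Qed.

Lemma Qup_S n a : 1 <= n -> Qup (S n) a = And (Qup n a) (Qc (S n) a).
Proof. destruct n; [lia | reflexivity]. Qed.

Lemma Q_mono k a b : GLP (Imp a b) -> GLP (Imp (Q k a) (Q k b)).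
Proof.
  intro H. induction k as [|k IH]; [exact H|].
  destruct (Nat.eq_dec k 0) as [->|Hk]; [exact H|].
  rewrite !Q_S by lia. exact (or_mono _ _ _ _ H (box_mono 0 _ _ IH)).
Qed.

Lemma Q_succ k a : 1 <= k -> GLP (Imp (Q k a) (Q (S k) a)).
Proof.
  induction 1 as [|k Hk IH].
  - apply ax_taut. solve_taut.
  - rewrite (Q_S k a Hk), (Q_S (S k) a) by lia.
    exact (or_mono _ _ _ _ (imp_refl a) (box_mono 0 _ _ IH)).
Qed.

Lemma Q_le i j a : 1 <= i -> i <= j -> GLP (Imp (Q i a) (Q j a)).
Proof.
  intros Hi Hij. induction Hij as [|j Hij IH]; [apply imp_refl|].
  exact (imp_trans _ _ _ IH (Q_succ j a ltac:(lia))).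
Qed.

Lemma Qup_equiv n a : 1 <= n -> GLP (Iff (Qup n a) (Or a (Neg (Box 0 (Q n a))))).
Proof.
  induction 1 as [|n Hn IH].
  - apply ax_taut. solve_taut.
  - pose proof (box_mono 0 _ _ (Q_succ n a Hn)) as Hbox.
    rewrite Qup_S by lia. unfold Qc. rewrite Q_S in * by lia.
    revert IH Hbox. apply taut_mp2. solve_taut.
Qed.

Lemma imp_Qup n a : 1 <= n -> GLP (Imp a (Qup n a)).
Proof. intro Hn. generalize (Qup_equiv n a Hn). apply taut_mp1. solve_taut. Qed.

Lemma apply_Q s k a : apply s (Q k a) = Q k (apply s a).
Proof.
  induction k as [|k IH]; [reflexivity|].
  destruct (Nat.eq_dec k 0) as [->|Hk]; [reflexivity|].
  rewrite !Q_S by lia. simpl. rewrite IH. reflexivity.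
Qed.

Lemma apply_Qup s n a : apply s (Qup n a) = Qup n (apply s a).
Proof.
  induction n as [|n IH]; [reflexivity|].
  destruct (Nat.eq_dec n 0) as [->|Hn]; [reflexivity|].
  rewrite !Qup_S by lia. unfold Qc, And, Neg. cbn [apply]. rewrite IH, apply_Q. reflexivity.
Qed.

Lemma sub_le_QS i j : 0 < i -> i <= j -> sub_le (QS i) (QS j).
Proof.
  intros Hi Hij. exists (QS i). intro q. unfold QS.
  destruct (Nat.eqb q pvar) eqn:Eq.
  - rewrite apply_Qup. simpl. set (A := Qup i (Var pvar)).
    pose proof (Qup_equiv i (Var pvar) Hi) as EA. fold A in EA.
    pose proof (Qup_equiv j A ltac:(lia)) as EJ.
    assert (Hbox : GLP (Imp (Box 0 (Q i (Var pvar))) (Box 0 (Q j A)))).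
    { apply box_mono. apply (imp_trans _ (Q i A)); [apply Q_mono | apply Q_le; lia].
      revert EA. apply taut_mp1. solve_taut. }
    revert EA EJ Hbox. apply taut_mp3. solve_taut.
  - simpl. rewrite Eq. apply ax_taut. solve_taut.
Qed.

Fixpoint sat (N : nat) (V : nat -> nat -> bool) (a : form) (x : nat) : bool :=
  match a with
  | Var n => V n x
  | Bot => false
  | Imp a b => negb (sat N V a x) || sat N V b x
  | Box 0 b => forallb (sat N V b) (seq (S x) (N - S x))
  | Box (S _) _ => true
  end.

Lemma sat_imp N V a b x :
  sat N V (Imp a b) x = true <-> (sat N V a x = true -> sat N V b x = true).
Proof. simpl. destruct (sat N V a x), (sat N V b x); simpl; intuition congruence. Qed.

Lemma sat_box0 N V b x :
  sat N V (Box 0 b) x = true <-> (forall y, x < y < N -> sat N V b y = true).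
Proof.
  simpl. rewrite forallb_forall. split; intros H y Hy.
  - apply H. apply in_seq. lia.
  - apply in_seq in Hy. apply H. lia.
Qed.

Lemma sat_or N V a b x : sat N V (Or a b) x = sat N V a x || sat N V b x.
Proof. simpl. destruct (sat N V a x); reflexivity. Qed.

Lemma sat_neg N V a x : sat N V (Neg a) x = negb (sat N V a x).
Proof. apply orb_false_r. Qed.

Lemma beval_sat N V x a : beval (fun f => sat N V f x) a = sat N V a x.
Proof. induction a; simpl; try reflexivity. rewrite IHa1, IHa2. reflexivity. Qed.

Lemma nat_down_ind x N (P : nat -> Prop) :
  (forall y, x < y < N -> (forall z, y < z < N -> P z) -> P y) ->
  forall y, x < y < N -> P y.
Proof.
  intro H. assert (K : forall m y, N - y <= m -> x < y < N -> P y).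
  { induction m as [|m IH]; intros y Hm Hy; [lia|].
    apply H; [exact Hy|]. intros z Hz. apply IH; lia. }
  intros y Hy. exact (K (N - y) y (le_n _) Hy).
Qed.

Lemma sat_sound N V a : GLP a -> forall x, sat N V a x = true.
Proof.
  induction 1 as [a Ha | k a b | k a | j k a Hjk | j k a Hjk | a b _ IHab _ IHa | k a _ IHa];
    intro x.
  - rewrite <- beval_sat. apply Ha.
  - destruct k; [|reflexivity].
    apply sat_imp. rewrite !sat_box0. intro Hab. apply sat_imp. rewrite !sat_box0.
    intros Ha y Hy. exact (proj1 (sat_imp _ _ _ _ _) (Hab y Hy) (Ha y Hy)).
  - destruct k; [|reflexivity].
    apply sat_imp. rewrite !sat_box0. intro Hlob.
    apply nat_down_ind. intros y Hy IH.
    exact (proj1 (sat_imp _ _ _ _ _) (Hlob y Hy) (proj2 (sat_box0 _ _ _ _) IH)).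
  - destruct k; [lia|]. apply sat_imp. reflexivity.
  - destruct k; [replace j with 0 by lia; apply sat_imp; auto|].
    apply sat_imp. reflexivity.
  - exact (proj1 (sat_imp _ _ _ _ _) (IHab x) (IHa x)).
  - destruct k; [|reflexivity]. apply sat_box0. auto.
Qed.

Lemma sat_iff N V a b x : GLP (Iff a b) -> sat N V a x = sat N V b x.
Proof.
  intro H. pose proof (sat_sound N V _ H x) as E. simpl in E.
  destruct (sat N V a x), (sat N V b x); simpl in E; congruence.
Qed.

Lemma sat_box0_depth N V b k x :
  1 <= k -> x < N -> (forall y, x < y < N -> sat N V b y = (N - y <? k)) ->
  sat N V (Box 0 b) x = (N - x <=? k).
Proof.
  intros Hk Hx Hb. apply eq_iff_eq_true. rewrite sat_box0, Nat.leb_le. split.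
  - intro H. destruct (Nat.eq_dec (S x) N) as [<-|HN]; [lia|].
    specialize (H (S x) ltac:(lia)). rewrite Hb, Nat.ltb_lt in H by lia. lia.
  - intros H y Hy. rewrite Hb, Nat.ltb_lt by lia. lia.
Qed.

Lemma sat_Q N V a k x : (forall y, y < N -> sat N V a y = false) ->
  1 <= k -> x < N -> sat N V (Q k a) x = (N - x <? k).
Proof.
  intros Ha Hk. revert x. induction Hk as [|k Hk IH]; intros x Hx.
  - simpl. rewrite Ha by exact Hx. symmetry. apply Nat.ltb_ge. lia.
  - rewrite Q_S, sat_or, Ha by assumption. cbn [orb].
    rewrite (sat_box0_depth N V _ k x Hk Hx) by (intros; apply IH; lia).
    apply eq_iff_eq_true. rewrite Nat.leb_le, Nat.ltb_lt. lia.
Qed.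

Lemma sat_Qup N V a n x : (forall y, y < N -> sat N V a y = false) ->
  1 <= n -> x < N -> sat N V (Qup n a) x = (n <? N - x).
Proof.
  intros Ha Hn Hx.
  rewrite (sat_iff N V _ _ x (Qup_equiv n a Hn)), sat_or, sat_neg, Ha by exact Hx.
  rewrite (sat_box0_depth N V _ n x Hn Hx) by (intros; apply sat_Q; [exact Ha | lia | lia]).
  rewrite Nat.leb_antisym. apply negb_involutive.
Qed.

Lemma not_sub_le_QS i j : 0 < i -> i < j -> ~ sub_le (QS j) (QS i).
Proof.
  intros Hi Hij [theta Ht].
  set (V := fun _ _ : nat => false).
  assert (Ep : forall y, sat j V (Qup j (Var pvar)) y = sat j V (Qup i (theta pvar)) y).
  { intro y. specialize (Ht pvar). unfold QS in Ht. simpl in Ht.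
    rewrite apply_Qup in Ht. exact (sat_iff j V _ _ y Ht). }
  assert (Hp : forall y, y < j -> sat j V (Var pvar) y = false) by reflexivity.
  assert (Ha : forall y, y < j -> sat j V (theta pvar) y = false).
  { intros y Hy. apply not_true_iff_false. intro Hay.
    pose proof (proj1 (sat_imp _ _ _ _ _) (sat_sound j V _ (imp_Qup i _ Hi) y) Hay) as H.
    rewrite <- Ep, (sat_Qup j V _ j y Hp), Nat.ltb_lt in H by lia. lia. }
  specialize (Ep 0).
  rewrite (sat_Qup j V _ j 0 Hp), (sat_Qup j V _ i 0 Ha), Nat.sub_0_r, Nat.ltb_irrefl in Ep by lia.
  symmetry in Ep. apply Nat.ltb_ge in Ep. lia.
Qed.

Theorem mainTheorem14 : forall i j : nat, 0 < i -> i < j -> sub_lt (QS i) (QS j).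
Proof.
  intros i j Hi Hij. split.
  - apply sub_le_QS; lia.
  - apply not_sub_le_QS; assumption.
Qed.
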